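(* Let $\mathfrak g$ be of type $A_n$. Then $(\mathcal B(\infty),\mathrm{wt},\varepsilon_i^\ast,\varphi_i^\ast,\widetilde e_i^\ast,\widetilde f_i^\ast)_{i\in I}$ is a highest weight $\mathfrak g$-crystal.
   Context: $I=\{1,\dots,n\}$, $\langle h_i,\alpha_j\rangle=2$ if $i=j$, $-1$ if $|i-j|=1$, $0$ otherwise. $\mathcal I=\{(s,t)\in\mathbb Z_{>0}\times I:s+t\le n+1\}$; $\mathcal B(\infty)$ is the set of $b=(b_{s,t})_{(s,t)\in\mathcal I}\in\mathbb Z_{\ge0}^{\mathcal I}$ with $b_{1,k}\ge b_{2,k-1}\ge\dots\ge b_{k,1}$ for $1\le k\le n$. Convention: $b_{s,t}=0$, $\mathbf e_{s,t}=0$ for $(s,t)\notin\mathcal I$ ($\mathbf e_{s,t}$ standard basis vectors). $\partial^\ast_{s,t}(b)=b_{s-1,t}-b_{s-1,t+1}-b_{s,t-1}+b_{s,t}$. For $i\in I$, $1\le k\le i$: $\Sigma^\ast_k(b)=\sum_{t=1}^k\partial^\ast_{t,i+1-t}(b)$; $\varepsilon_i^\ast(b)=\max_{1\le k\le i}\Sigma^\ast_k(b)$; $m_i^\ast(b)$, $M_i^\ast(b)$ the smallest, largest $k$ attaining the maximum. $\mathrm{wt}(b)=-\sum b_{s,t}\alpha_t$; $\varphi_i^\ast(b)=\varepsilon_i^\ast(b)+\langle h_i,\mathrm{wt}(b)\rangle$; $\widetilde f_i^\ast(b)=b+\sum_{t=1}^{m_i^\ast(b)}(\mathbf e_{t,i+1-t}-\mathbf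 e_{t-1,i+1-t})$; $\widetilde e_i^\ast(b)=b-\sum_{t=1}^{M_i^\ast(b)}(\mathbf e_{t,i+1-t}-\mathbf e_{t-1,i+1-t})$ if $\varepsilon_i^\ast(b)>0$, and $\widetilde e_i^\ast(b)=\mathbf 0$ (formal symbol) otherwise. A crystal is a set $B$ with $\mathrm{wt}:B\to P$, $\widetilde e_i,\widetilde f_i:B\to B\cup\{\mathbf 0\}$, $\varepsilon_i,\varphi_i:B\to\mathbb Z\cup\{-\infty\}$ such that $\varphi_i=\varepsilon_i+\langle h_i,\mathrm{wt}\rangle$; if $\widetilde e_ib\ne\mathbf0$ then $\mathrm{wt}(\widetilde e_ib)=\mathrm{wt}(b)+\alpha_i$, $\varepsilon_i(\widetilde e_ib)=\varepsilon_i(b)-1$, $\varphi_i(\widetilde e_ib)=\varphi_i(b)+1$; if $\widetilde f_ib\ne\mathbf0$ then $\mathrm{wt}(\widetilde f_ib)=\mathrm{wt}(b)-\alpha_i$, $\varepsilon_i(\widetilde f_ib)=\varepsilon_i(b)+1$, $\varphi_i(\widetilde f_ib)=\varphi_i(b)-1$; $\widetilde f_ib=b'$ iff $b=\widetilde e_ib'$; $\varepsilon_i(b)=-\infty$ implies $\widetilde e_ib=\widetilde f_ib=\mathbf0$. It is a highest weight crystal if there is $b_0\in B$ reachable from every $b$ by a sequence of $\widetilde e_i$'s and $\varepsilon_i(b)=\max\{m\ge0:\widetilde e_i^m b\ne\mathbf 0\}$ for all $b,i$. *)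

From HB Require Import structures.
From mathcomp Require Import all_boot all_order all_algebra.
Set Implicit Arguments. Unset Strict Implicit. Unset Printing Implicit Defensive.
Import Order.TTheory GRing.Theory Num.Theory.
Local Open Scope ring_scope.

(* A crystal structure on the subset S of an ambient type A; the formal
   symbol 0 is rendered as None. *)

Definition iter_e (I A : Type) (e : I -> A -> option A) (i : I) (m : nat) (b : A)
  : option A := iter m (fun ob => obind (e i) ob) (Some b).

Definition is_crystal (I : finType) (P : zmodType) (pair : I -> P -> int)
  (alpha : I -> P) (A : Type) (S : pred A) (wt : A -> P)
  (eps phi : I -> A -> int) (e f : I -> A -> option A) : Prop :=
  forall (i : I) (b : A), S b ->
  [/\ phi i b = eps i b + pair i (wt b),
      (forall b', e i b = Some b' -> S b') /\
      (forall b', f i b = Some b' -> S b'),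
      (forall b', e i b = Some b' ->
         [/\ wt b' = wt b + alpha i, eps i b' = eps i b - 1
           & phi i b' = phi i b + 1]),
      (forall b', f i b = Some b' ->
         [/\ wt b' = wt b - alpha i, eps i b' = eps i b + 1
           & phi i b' = phi i b - 1])
    & (forall b', S b' -> (f i b = Some b' <-> e i b' = Some b))].

Definition is_highest_weight_crystal (I : finType) (P : zmodType)
  (pair : I -> P -> int) (alpha : I -> P) (A : Type) (S : pred A)
  (wt : A -> P) (eps phi : I -> A -> int) (e f : I -> A -> option A) : Prop :=
  [/\ is_crystal pair alpha S wt eps phi e f,
      (exists2 b0, S b0 &
         forall b, S b -> exists s : seq I,
           foldl (fun ob i => obind (e i) ob) (Some b) s = Some b0)
    & (forall (i : I) (b : A), S b ->
         [/\ 0 <= eps i b,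
             iter_e e i `|eps i b|%N b <> None
           & forall m : nat, iter_e e i m b <> None -> (m%:Z <= eps i b)])].

(* Indices: i : 'I_n stands for the index i.+1 of I = {1,...,n}. *)

Definition cartanA (i j : nat) : int :=
  if i == j then 2 else if (i == j.+1) || (j == i.+1) then -1 else 0.

(* weights: coordinates in the basis of simple roots; coordinate j : 'I_n
   is the coefficient of alpha_{j+1} *)
Definition weightA (n : nat) := {ffun 'I_n -> int}.

Definition alphaA (n : nat) (i : 'I_n) : weightA n := [ffun j => (i == j)%:Z].

Definition pairA (n : nat) (i : 'I_n) (la : weightA n) : int :=
  \sum_(j < n) cartanA i.+1 j.+1 * la j.

Definition arr (n : nat) := {ffun 'I_n.+1 * 'I_n.+1 -> int}.

Definition inI (n s t : nat) : bool := [&& 0 < s, 0 < t & s + t <= n.+1]%N.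

Definition getb (n : nat) (b : arr n) (s t : nat) : int :=
  if inI n s t then b (inord s, inord t) else 0.

Definition ebas (n : nat) (s t : nat) : arr n :=
  [ffun p : 'I_n.+1 * 'I_n.+1 => ([&& (p.1 : nat) == s, (p.2 : nat) == t & inI n s t] : nat)%:Z].

Definition inBinf (n : nat) (b : arr n) : bool :=
  [forall p : 'I_n.+1 * 'I_n.+1, (0 <= b p) && (inI n p.1 p.2 || (b p == 0))] &&
  [forall k : 'I_n.+1, forall s : 'I_n.+1,
     ((1 <= s)%N && (s < k)%N) ==> (getb b (s.+1) (k - s)%N <= getb b s (k.+1 - s)%N)].

Definition partial_star (n : nat) (b : arr n) (s t : nat) : int :=
  getb b s.-1 t - getb b s.-1 t.+1 - getb b s t.-1 + getb b s t.

Definition Sigma_star (n : nat) (i : nat) (b : arr n) (k : nat) : int :=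
  \sum_(1 <= t < k.+1) partial_star b t (i.+1 - t)%N.

Definition eps_star_nat (n : nat) (i : nat) (b : arr n) : int :=
  foldr (fun k acc => Num.max (Sigma_star i b k) acc) (Sigma_star i b 1)
        (iota 1 i).

Definition m_star (n : nat) (i : nat) (b : arr n) : nat :=
  head 0%N [seq k <- iota 1 i | Sigma_star i b k == eps_star_nat i b].

Definition M_star (n : nat) (i : nat) (b : arr n) : nat :=
  last 0%N [seq k <- iota 1 i | Sigma_star i b k == eps_star_nat i b].

Definition wtB (n : nat) (b : arr n) : weightA n :=
  [ffun j : 'I_n => - \sum_(0 <= s < n.+2) getb b s j.+1].

Definition shift_vec (n : nat) (i m : nat) : arr n :=
  \sum_(1 <= t < m.+1) (ebas n t (i.+1 - t)%N - ebas n t.-1 (i.+1 - t)%N).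

Definition eps_star (n : nat) (i : 'I_n) (b : arr n) : int := eps_star_nat i.+1 b.

Definition phi_star (n : nat) (i : 'I_n) (b : arr n) : int :=
  eps_star i b + pairA i (wtB b).

Definition f_star (n : nat) (i : 'I_n) (b : arr n) : option (arr n) :=
  Some (b + shift_vec n i.+1 (m_star i.+1 b)).

Definition e_star (n : nat) (i : 'I_n) (b : arr n) : option (arr n) :=
  if 0 < eps_star i b then Some (b - shift_vec n i.+1 (M_star i.+1 b)) else None.

From mathcomp Require Import all_boot all_order all_algebra zify.
Set Implicit Arguments. Unset Strict Implicit. Unset Printing Implicit Defensive.
Import Order.TTheory GRing.Theory Num.Theory.

(* Sigma*_k telescopes along antidiagonals: Sigma*_k(b) = b_{k,i+1-k} - b_{k,i-k}.
   Adding the shift vector of length m therefore changes Sigma*_k by [k <= m] + [k < m].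
   For m = m*_i(b), the first maximiser, this raises eps*_i by one and makes m the
   last maximiser of the new sums, so e*_i undoes f*_i; symmetrically for e*_i and
   M*_i.  The new arrays stay in B(infinity) because b decreases along antidiagonals
   and Sigma*_k < eps*_i for k < m*_i(b) (resp. k > M*_i(b)).
   For the highest weight property: e*_i raises the height of the weight by one, the
   height is nonpositive on B(infinity), and an array all of whose eps*_i are <= 0
   vanishes, column by column. *)

Lemma head_filter_iota (P : pred nat) a c : (exists2 k, a <= k < a + c & P k) ->
  let h := head 0 [seq k <- iota a c | P k] in
  [/\ a <= h < a + c, P h & forall k, a <= k < h -> ~~ P k].
Proof.
elim: c a => [|c IH] a [k kac Pk]; first by lia.
rewrite /=; case: ifP => Pa /=; first by split => // [|j]; lia.
have k_gt_a : a.+1 <= k < a.+1 + c by case: (eqVneq k a) Pk => [->|]; rewrite ?Pa //; lia.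
have [hac Ph hlt] := IH a.+1 (ex_intro2 _ _ k k_gt_a Pk).
split => // [|j ajh]; first by lia.
by case: (eqVneq j a) => [->|ja]; rewrite ?Pa // hlt //; lia.
Qed.

Lemma last_filter_iota (P : pred nat) a c : (exists2 k, a <= k < a + c & P k) ->
  let h := last 0 [seq k <- iota a c | P k] in
  [/\ a <= h < a + c, P h & forall k, h < k < a + c -> ~~ P k].
Proof.
elim: c => [|c IH] [k kac Pk]; first by lia.
rewrite -addn1 iotaD cats1 filter_rcons; case: ifP => Pac /=.
  by rewrite last_rcons; split => // [|j]; lia.
have k_lt_ac : a <= k < a + c by case: (eqVneq k (a + c)) Pk => [->|]; rewrite ?Pac //; lia.
have [hac Ph hgt] := IH (ex_intro2 _ _ k k_lt_ac Pk).
split => // [|j hjac]; first by lia.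
by case: (eqVneq j (a + c)) => [->|jac]; rewrite ?Pac // hgt //; lia.
Qed.

Section MaxUpto.
Local Open Scope order_scope.
Context {disp : Order.disp_t} {T : orderType disp}.
Implicit Types (F : nat -> T) (i k : nat).

Definition max_upto F i : T := foldr (fun k acc => Order.max (F k) acc) (F 1%N) (iota 1 i).

Definition first_argmax F i : nat := head 0%N [seq k <- iota 1 i | F k == max_upto F i].

Definition last_argmax F i : nat := last 0%N [seq k <- iota 1 i | F k == max_upto F i].

Lemma max_upto_ub F i k : (1 <= k <= i)%N -> F k <= max_upto F i.
Proof.
rewrite -(mem_iota 1 i) /max_upto; elim: (iota 1 i) => //= j s IH.
by rewrite in_cons le_max => /orP[/eqP->|/IH->]; rewrite ?lexx ?orbT.
Qed.

Lemma max_upto_attained F i : (0 < i)%N -> exists2 k, (1 <= k <= i)%N & F k = max_upto F i.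
Proof.
move=> i_gt0; suff [k ks Fk] : exists2 k, k \in 1%N :: iota 1 i & F k = max_upto F i.
  by exists k => //; move: ks; rewrite in_cons mem_iota; lia.
rewrite /max_upto; elim: (iota 1 i) => /= [|j s [k ks Fk]]; first by exists 1%N; rewrite ?mem_head.
case: (leP (F j) (foldr _ _ s)) => _; last by exists j; rewrite // !inE eqxx orbT.
by exists k => //; move: ks; rewrite !inE => /orP[->|->]; rewrite ?orbT.
Qed.

Lemma max_upto_eq F i v : (0 < i)%N ->
  (forall k, (1 <= k <= i)%N -> F k <= v) -> (exists2 k, (1 <= k <= i)%N & F k = v) ->
  max_upto F i = v.
Proof.
move=> i_gt0 Fle [k ki Fkv]; have [k' k'i Fk'] := max_upto_attained F i_gt0.
by apply/eqP; rewrite eq_le -{2}Fkv max_upto_ub // andbT -Fk' Fle.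
Qed.

Lemma first_argmaxP F i : (0 < i)%N ->
  [/\ (1 <= first_argmax F i <= i)%N, F (first_argmax F i) = max_upto F i
    & forall k, (1 <= k < first_argmax F i)%N -> F k < max_upto F i].
Proof.
move=> i_gt0; have [k ki Fk] := max_upto_attained F i_gt0.
have [|first_i /eqP-> lt_first] := @head_filter_iota (fun k => F k == max_upto F i) 1 i.
  by exists k; [lia | apply/eqP].
rewrite /first_argmax; split=> [|//|k' k'_lt]; first by lia.
by rewrite lt_neqAle lt_first // max_upto_ub //; lia.
Qed.

Lemma last_argmaxP F i : (0 < i)%N ->
  [/\ (1 <= last_argmax F i <= i)%N, F (last_argmax F i) = max_upto F i
    & forall k, (last_argmax F i < k <= i)%N -> F k < max_upto F i].
Proof.
move=> i_gt0; have [k ki Fk] := max_upto_attained F i_gt0.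
have [|last_i /eqP-> gt_last] := @last_filter_iota (fun k => F k == max_upto F i) 1 i.
  by exists k; [lia | apply/eqP].
rewrite /last_argmax; split=> [|//|k' k'_gt]; first by lia.
by rewrite lt_neqAle gt_last // max_upto_ub //; lia.
Qed.

Lemma first_argmax_eq F i m : (1 <= m <= i)%N -> F m = max_upto F i ->
  (forall k, (1 <= k < m)%N -> F k < max_upto F i) -> first_argmax F i = m.
Proof.
move=> mi Fm lt_m; have /(first_argmaxP F) [first_i Ffirst lt_first] : (0 < i)%N by lia.
case: (ltngtP (first_argmax F i) m) => // cmp.
  by have := ltxx (max_upto F i); rewrite -{1}Ffirst lt_m //; lia.
by have := ltxx (max_upto F i); rewrite -{1}Fm lt_first //; lia.
Qed.

Lemma last_argmax_eq F i m : (1 <= m <= i)%N -> F m = max_upto F i ->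
  (forall k, (m < k <= i)%N -> F k < max_upto F i) -> last_argmax F i = m.
Proof.
move=> mi Fm gt_m; have /(last_argmaxP F) [last_i Flast gt_last] : (0 < i)%N by lia.
case: (ltngtP (last_argmax F i) m) => // cmp.
  by have := ltxx (max_upto F i); rewrite -{1}Fm gt_last //; lia.
by have := ltxx (max_upto F i); rewrite -{1}Flast gt_m //; lia.
Qed.

End MaxUpto.

Local Open Scope ring_scope.

Lemma sum_nat_single (V : nmodType) N (F : nat -> V) c : (forall s, s != c -> F s = 0) ->
  \sum_(0 <= s < N) F s = if (c < N)%N then F c else 0.
Proof.
move=> F0; rewrite -[(c < N)%N]/(0 <= c < N)%N -(big_nat1_eq +%R) big_mkcond; apply: eq_bigr => s _.
by case: eqVneq => [->|/F0].
Qed.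

Section Bump.
Variables (F G : nat -> int) (i : nat).
Hypothesis i_gt0 : (0 < i)%N.

Lemma max_upto_bump_first :
  (forall k, (1 <= k <= i)%N ->
     G k = F k + (k <= first_argmax F i)%N%:Z + (k < first_argmax F i)%N%:Z) ->
  max_upto G i = max_upto F i + 1 /\ last_argmax G i = first_argmax F i.
Proof.
have [] := first_argmaxP F i_gt0; set m := first_argmax F i => mi Fm lt_m G_def.
have Gmax : max_upto G i = max_upto F i + 1.
  apply: max_upto_eq => // [k ki|]; last by exists m; rewrite // G_def // Fm; lia.
  have := max_upto_ub F ki; rewrite G_def //; case: (ltnP k m) => km; last by lia.
  by have := lt_m k; lia.
split=> //; apply: last_argmax_eq => // [|k ki]; first by rewrite Gmax G_def // Fm; lia.
by have := @max_upto_ub _ _ F i k; rewrite Gmax G_def; lia.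
Qed.

Lemma max_upto_drop_last :
  (forall k, (1 <= k <= i)%N ->
     G k = F k - (k <= last_argmax F i)%N%:Z - (k < last_argmax F i)%N%:Z) ->
  max_upto G i = max_upto F i - 1 /\ first_argmax G i = last_argmax F i.
Proof.
have [] := last_argmaxP F i_gt0; set m := last_argmax F i => mi Fm gt_m G_def.
have Gmax : max_upto G i = max_upto F i - 1.
  apply: max_upto_eq => // [k ki|]; last by exists m; rewrite // G_def // Fm; lia.
  have := max_upto_ub F ki; rewrite G_def //; case: (leqP k m) => km; first by lia.
  by have := gt_m k; lia.
split=> //; apply: first_argmax_eq => // [|k ki]; first by rewrite Gmax G_def // Fm; lia.
by have := @max_upto_ub _ _ F i k; rewrite Gmax G_def; lia.
Qed.

End Bump.

Section Arrays.
Variable n : nat.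
Implicit Types (b : arr n) (i k m s t : nat).

Lemma getbD b1 b2 s t : getb (b1 + b2) s t = getb b1 s t + getb b2 s t.
Proof. by rewrite /getb; case: ifP; rewrite ?ffunE ?addr0. Qed.

Lemma getbB b1 b2 s t : getb (b1 - b2) s t = getb b1 s t - getb b2 s t.
Proof. by rewrite /getb; case: ifP; rewrite ?ffunE ?subr0. Qed.

Lemma getb0 s t : getb (0 : arr n) s t = 0.
Proof. by rewrite /getb; case: ifP; rewrite ?ffunE. Qed.

Lemma getb_out b s t : ~~ inI n s t -> getb b s t = 0.
Proof. by rewrite /getb => /negbTE->. Qed.

Lemma getb_val b (p : 'I_n.+1 * 'I_n.+1) : inI n p.1 p.2 -> getb b p.1 p.2 = b p.
Proof. by case: p => s t /= st; rewrite /getb st !inord_val. Qed.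

Lemma getb_ebas s0 t0 s t : getb (ebas n s0 t0) s t = [&& s == s0, t == t0 & inI n s t]%:Z.
Proof.
rewrite /getb /ebas; case: ifP => st; last by rewrite !andbF.
by rewrite ffunE /= !inordK; move: st; rewrite /inI; lia.
Qed.

Definition shift_coef i m s t : int :=
  ((s + t == i.+1) && (0 < s <= m))%N%:Z - ((s + t == i) && (0 < s < m))%N%:Z.

Lemma getb_shift_vec i m s t : (m <= i <= n)%N -> getb (shift_vec n i m) s t = shift_coef i m s t.
Proof.
elim: m => [|m IH] mi; first by rewrite /shift_vec big_geq // getb0 /shift_coef; lia.
rewrite /shift_vec big_nat_recr //= -/(shift_vec n i m) getbD getbB !getb_ebas IH; last by lia.
by rewrite /shift_coef /inI; lia.
Qed.

Lemma shift_vec_out i m (p : 'I_n.+1 * 'I_n.+1) : ~~ inI n p.1 p.2 -> shift_vec n i m p = 0.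
Proof.
move=> p_out; have no_ebas s t : [&& p.1 == s :> nat, p.2 == t :> nat & inI n s t] = false.
  by apply/and3P => -[/eqP<- /eqP<-]; apply/negP.
by rewrite /shift_vec sum_ffunE big1 // => t _; rewrite !ffunE !no_ebas.
Qed.

Lemma Sigma_star_telescope i b k : (k <= i)%N ->
  Sigma_star i b k = getb b k (i.+1 - k) - getb b k (i - k).
Proof.
pose g j := getb b j.-1 (i.+1 - j.-1) - getb b j.-1 (i - j.-1).
move=> ki; rewrite /Sigma_star (telescope_sumr_eq g) // => [|j jk].
  by rewrite /g /= !subr0.
rewrite /g /partial_star /=.
have -> : (i.+1 - j.-1 = (i.+1 - j).+1)%N by lia.
have -> : (i - j.-1 = i.+1 - j)%N by lia.
have -> : ((i.+1 - j).-1 = i - j)%N by lia.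
by lia.
Qed.

Lemma Sigma_star_addshift i m b k : (1 <= m <= i)%N -> (i <= n)%N -> (1 <= k <= i)%N ->
  Sigma_star i (b + shift_vec n i m) k = Sigma_star i b k + (k <= m)%N%:Z + (k < m)%N%:Z.
Proof.
move=> mi i_le_n ki; rewrite !Sigma_star_telescope ?getbD ?getb_shift_vec; try lia.
by rewrite /shift_coef; lia.
Qed.

Lemma Sigma_star_subshift i m b k : (1 <= m <= i)%N -> (i <= n)%N -> (1 <= k <= i)%N ->
  Sigma_star i (b - shift_vec n i m) k = Sigma_star i b k - (k <= m)%N%:Z - (k < m)%N%:Z.
Proof.
move=> mi i_le_n ki; rewrite !Sigma_star_telescope ?getbB ?getb_shift_vec; try lia.
by rewrite /shift_coef; lia.
Qed.

Lemma eps_star_nat_ub i b k : (1 <= k <= i)%N -> Sigma_star i b k <= eps_star_nat i b.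
Proof. exact: max_upto_ub. Qed.

Lemma m_starP i b : (0 < i)%N ->
  [/\ (1 <= m_star i b <= i)%N, Sigma_star i b (m_star i b) = eps_star_nat i b
    & forall k, (1 <= k < m_star i b)%N -> Sigma_star i b k < eps_star_nat i b].
Proof. exact: first_argmaxP. Qed.

Lemma M_starP i b : (0 < i)%N ->
  [/\ (1 <= M_star i b <= i)%N, Sigma_star i b (M_star i b) = eps_star_nat i b
    & forall k, (M_star i b < k <= i)%N -> Sigma_star i b k < eps_star_nat i b].
Proof. exact: last_argmaxP. Qed.

Lemma eps_star_addshift i b : (1 <= i <= n)%N ->
  eps_star_nat i (b + shift_vec n i (m_star i b)) = eps_star_nat i b + 1 /\
  M_star i (b + shift_vec n i (m_star i b)) = m_star i b.
Proof.
move=> i_in; have /(m_starP b) [mi _ _] : (0 < i)%N by lia.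
by apply: max_upto_bump_first => [|k ki]; rewrite ?Sigma_star_addshift //; lia.
Qed.

Lemma eps_star_subshift i b : (1 <= i <= n)%N ->
  eps_star_nat i (b - shift_vec n i (M_star i b)) = eps_star_nat i b - 1 /\
  m_star i (b - shift_vec n i (M_star i b)) = M_star i b.
Proof.
move=> i_in; have /(M_starP b) [mi _ _] : (0 < i)%N by lia.
by apply: max_upto_drop_last => [|k ki]; rewrite ?Sigma_star_subshift //; lia.
Qed.

Record is_Binf b : Prop := IsBinf {
  Binf_out : forall p : 'I_n.+1 * 'I_n.+1, ~~ inI n p.1 p.2 -> b p = 0;
  Binf_ge0 : forall s t, 0 <= getb b s t;
  Binf_antidiag : forall k s, (k <= n)%N -> (1 <= s < k)%N ->
    getb b s.+1 (k - s) <= getb b s (k.+1 - s)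
}.

Lemma inBinfP b : reflect (is_Binf b) (inBinf b).
Proof.
apply: (iffP andP) => [[/forallP b_supp /forallP b_mono] | [b_out b_ge0 b_mono]]; split.
- by move=> p p_out; have /andP[_] := b_supp p; rewrite (negbTE p_out) => /eqP.
- by move=> s t; rewrite /getb; case: ifP => // _; case/andP: (b_supp (inord s, inord t)).
- move=> k s kn sk; have /forallP/(_ (inord s)) := b_mono (inord k).
  by rewrite !inordK; lia.
- apply/forallP => p; case: (boolP (inI n p.1 p.2)) => [p_in | /b_out->]; last by rewrite eqxx orbT.
  by rewrite -(getb_val b p_in) b_ge0.
- apply/forallP => k; apply/forallP => s; apply/implyP => sk; apply: b_mono => //.
  by have := ltn_ord k; lia.
Qed.

Lemma is_Binf0 : is_Binf 0.
Proof. by split=> *; rewrite ?ffunE ?getb0. Qed.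

Lemma getb_antidiag_step b k s : is_Binf b -> (k <= n.+1)%N -> (0 < s)%N ->
  getb b s.+1 (k - s.+1) <= getb b s (k - s).
Proof.
case=> _ b_ge0 b_mono kn s_gt0; case: (ltnP s.+1 k) => [sk | ks].
  by case: k kn sk => // k kn sk; rewrite subSS; apply: b_mono; lia.
by rewrite getb_out ?b_ge0 // /inI; lia.
Qed.

Lemma getb_antidiag_mono b k s s' : is_Binf b -> (k <= n.+1)%N -> (0 < s <= s')%N ->
  getb b s' (k - s') <= getb b s (k - s).
Proof.
move=> hb kn /andP[s_gt0]; elim: s' => [|s' IH]; first by lia.
rewrite leq_eqVlt => /orP[/eqP-> // | ss']; apply: le_trans (IH ss').
by apply: getb_antidiag_step => //; lia.
Qed.

Section Preservation.
Variables (b : arr n) (i : nat).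
Hypotheses (hb : is_Binf b) (i_in : (1 <= i <= n)%N).

Let i_gt0 : (0 < i)%N. Proof. by case/andP: i_in. Qed.
Let i_le_n : (i <= n)%N. Proof. by case/andP: i_in. Qed.

Lemma getb_gt0_before_m_star s : (1 <= s < m_star i b)%N -> 0 < getb b s (i - s).
Proof.
have [] := m_starP b i_gt0; set m := m_star i b => mi Sm lt_m sm.
have := lt_m s sm; rewrite -Sm !Sigma_star_telescope; try lia.
have : getb b m (i.+1 - m) <= getb b s (i.+1 - s) by apply: getb_antidiag_mono => //; lia.
by have := Binf_ge0 hb m (i - m); lia.
Qed.

Lemma getb_lt_at_m_star s : (1 <= s)%N -> s.+1 = m_star i b ->
  getb b s.+1 (i - s.+1) < getb b s (i - s).
Proof.
have [] := m_starP b i_gt0; set m := m_star i b => mi Sm lt_m s_gt0 sm.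
have := lt_m s; rewrite -Sm -sm !Sigma_star_telescope; try lia.
have : getb b s.+1 (i.+1 - s.+1) <= getb b s (i.+1 - s) by apply: getb_antidiag_step => //; lia.
by lia.
Qed.

Lemma is_Binf_addshift : is_Binf (b + shift_vec n i (m_star i b)).
Proof.
have [] := m_starP b i_gt0; set m := m_star i b => mi _ _.
case: hb => b_out _ b_mono; split.
- by move=> p p_out; rewrite ffunE b_out // shift_vec_out // addr0.
- move=> s t; rewrite getbD getb_shift_vec; last by lia.
  case: (boolP ((s + t == i) && (0 < s < m))%N) => [st | not_st].
    have -> : t = (i - s)%N by lia.
    by have := getb_gt0_before_m_star (_ : 1 <= s < m)%N; rewrite /shift_coef; lia.
  by have := Binf_ge0 hb s t; rewrite /shift_coef; lia.
- move=> k s kn sk; rewrite !getbD !getb_shift_vec; try lia.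
  have := b_mono k s kn sk.
  case: (boolP ((k.+1 == i) && (s.+1 == m))) => [/andP[/eqP ki /eqP sm] | ksm].
    by have := getb_lt_at_m_star (_ : 1 <= s)%N sm; rewrite -ki subSS /shift_coef; lia.
  by rewrite /shift_coef; lia.
Qed.

Lemma getb_gt0_upto_M_star t : 0 < eps_star_nat i b -> (1 <= t <= M_star i b)%N ->
  0 < getb b t (i.+1 - t).
Proof.
have [] := M_starP b i_gt0; set M := M_star i b => Mi SM _ eps_gt0 tM.
move: eps_gt0; rewrite -SM Sigma_star_telescope; last by lia.
have : getb b M (i.+1 - M) <= getb b t (i.+1 - t) by apply: getb_antidiag_mono => //; lia.
by have := Binf_ge0 hb M (i - M); lia.
Qed.

Lemma getb_lt_after_M_star : (M_star i b < i)%N ->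
  getb b (M_star i b).+1 (i - M_star i b) < getb b (M_star i b) (i.+1 - M_star i b).
Proof.
have [] := M_starP b i_gt0; set M := M_star i b => Mi SM gt_M Mi'.
have := gt_M M.+1; rewrite -SM !Sigma_star_telescope; try lia.
have : getb b M.+1 (i - M.+1) <= getb b M (i - M) by apply: getb_antidiag_step => //; lia.
by rewrite subSS; lia.
Qed.

Lemma is_Binf_subshift : 0 < eps_star_nat i b -> is_Binf (b - shift_vec n i (M_star i b)).
Proof.
move=> eps_gt0; have [] := M_starP b i_gt0; set M := M_star i b => Mi _ _.
case: hb => b_out _ b_mono; split.
- by move=> p p_out; rewrite !ffunE b_out // shift_vec_out // subr0.
- move=> s t; rewrite getbB getb_shift_vec; last by lia.
  case: (boolP ((s + t == i.+1) && (0 < s <= M))%N) => [st | not_st].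
    have -> : t = (i.+1 - s)%N by lia.
    by have := getb_gt0_upto_M_star eps_gt0 (_ : 1 <= s <= M)%N; rewrite /shift_coef; lia.
  by have := Binf_ge0 hb s t; rewrite /shift_coef; lia.
- move=> k s kn sk; rewrite !getbB !getb_shift_vec; try lia.
  have := b_mono k s kn sk.
  case: (boolP ((k == i) && (s == M))) => [/andP[/eqP ki /eqP sM] | ksM].
    by have := getb_lt_after_M_star (_ : M < i)%N; rewrite -/M ki sM /shift_coef; lia.
  by rewrite /shift_coef; lia.
Qed.

End Preservation.

Lemma wtBD b1 b2 : wtB (b1 + b2) = wtB b1 + wtB b2.
Proof.
apply/ffunP => j; rewrite !ffunE -opprD -big_split; congr (- _).
by apply: eq_bigr => s _; rewrite getbD.
Qed.

Lemma wtBB b1 b2 : wtB (b1 - b2) = wtB b1 - wtB b2.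
Proof.
apply/ffunP => j; rewrite !ffunE -opprD -sumrB; congr (- _).
by apply: eq_bigr => s _; rewrite getbB.
Qed.

Lemma wtB_shift_vec (i : 'I_n) m : (1 <= m <= i.+1)%N -> wtB (shift_vec n i.+1 m) = - alphaA i.
Proof.
move=> mi; apply/ffunP => j; rewrite !ffunE; congr (- _).
have i_lt := ltn_ord i; have j_lt := ltn_ord j.
rewrite (eq_bigr (shift_coef i.+1 m ^~ j.+1)) => [|s _]; last by rewrite getb_shift_vec //; lia.
rewrite /shift_coef sumrB (@sum_nat_single _ _ _ (i.+1 - j)%N) => [|s]; last by lia.
rewrite (@sum_nat_single _ _ _ (i.+1 - j.+1)%N) => [|s]; last by lia.
by rewrite -val_eqE /= !ifT; lia.
Qed.

Lemma eps_star_nat_ge0 i b : is_Binf b -> (1 <= i <= n)%N -> 0 <= eps_star_nat i b.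
Proof.
case=> _ b_ge0 _ i_in; have : Sigma_star i b i <= eps_star_nat i b by apply: eps_star_nat_ub; lia.
rewrite Sigma_star_telescope // subnn [getb b i 0]getb_out ?subr0; last by rewrite /inI andbF.
exact/le_trans/b_ge0.
Qed.

Lemma Binf_eps_star_le0 b : is_Binf b -> (forall i : 'I_n, eps_star i b <= 0) -> b = 0.
Proof.
move=> hb eps_le0; have b0 t s : getb b s t = 0.
  elim: t s => [|t IH] s; first by rewrite getb_out // /inI; lia.
  have [/and3P[s_gt0 _ st_n] | /getb_out //] := boolP (inI n s t.+1).
  have i_lt : ((s + t).-1 < n)%N by lia.
  have : Sigma_star (s + t) b s <= 0.
    apply: le_trans (eps_le0 (Ordinal i_lt)); rewrite /eps_star /= prednK; last by lia.
    by apply: eps_star_nat_ub; lia.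
  rewrite Sigma_star_telescope ?leq_addr // -addnS !addKn IH subr0.
  by have := Binf_ge0 hb s t.+1; lia.
apply/ffunP => p; rewrite ffunE; have [p_in | /(Binf_out hb) //] := boolP (inI n p.1 p.2).
by rewrite -(getb_val b p_in) b0.
Qed.

End Arrays.

Section Weights.
Variable n : nat.
Implicit Types (i : 'I_n) (w : weightA n).

Lemma pairAD i w1 w2 : pairA i (w1 + w2) = pairA i w1 + pairA i w2.
Proof. by rewrite /pairA -big_split; apply: eq_bigr => j _; rewrite ffunE mulrDr. Qed.

Lemma pairAB i w1 w2 : pairA i (w1 - w2) = pairA i w1 - pairA i w2.
Proof. by rewrite /pairA -sumrB; apply: eq_bigr => j _; rewrite !ffunE mulrBr. Qed.

Lemma pairA_alphaA i : pairA i (alphaA i) = 2.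
Proof.
rewrite /pairA (bigD1 i) //= big1 => [|j ji]; first by rewrite ffunE eqxx /cartanA eqxx addr0.
by rewrite ffunE eq_sym (negbTE ji) mulr0.
Qed.

Definition height w : int := \sum_(j < n) w j.

Lemma heightD w1 w2 : height (w1 + w2) = height w1 + height w2.
Proof. by rewrite /height -big_split; apply: eq_bigr => j _; rewrite ffunE. Qed.

Lemma height_alphaA i : height (alphaA i) = 1.
Proof.
rewrite /height (bigD1 i) //= big1 => [|j ji]; first by rewrite ffunE eqxx addr0.
by rewrite ffunE eq_sym (negbTE ji).
Qed.

Lemma height_wtB_le0 (b : arr n) : is_Binf b -> height (wtB b) <= 0.
Proof.
case=> _ b_ge0 _; rewrite /height -oppr_ge0 -sumrN; apply: sumr_ge0 => j _.
by rewrite ffunE opprK; apply: sumr_ge0.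
Qed.

End Weights.

Section Operators.
Variables (n : nat) (i : 'I_n) (b : arr n).
Hypothesis hb : is_Binf b.

Let i_in : (1 <= i.+1 <= n)%N. Proof. exact: ltn_ord. Qed.

Lemma eps_star_ge0 : 0 <= eps_star i b.
Proof. exact: eps_star_nat_ge0. Qed.

Lemma f_star_spec b' : f_star i b = Some b' ->
  [/\ is_Binf b', wtB b' = wtB b - alphaA i, eps_star i b' = eps_star i b + 1
    & e_star i b' = Some b].
Proof.
move=> [<-]; have [mi _ _] := m_starP b (ltn0Sn i).
have [eps_f M_f] := eps_star_addshift b i_in.
split; first exact: is_Binf_addshift.
- by rewrite wtBD wtB_shift_vec.
- exact: eps_f.
by rewrite /e_star /eps_star eps_f M_f ltzD1 eps_star_ge0 addrK.
Qed.

Lemma e_star_spec b' : e_star i b = Some b' ->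
  [/\ is_Binf b', wtB b' = wtB b + alphaA i, eps_star i b' = eps_star i b - 1
    & f_star i b' = Some b].
Proof.
rewrite /e_star; case: ifP => // eps_gt0 [<-]; have [Mi _ _] := M_starP b (ltn0Sn i).
have [eps_e m_e] := eps_star_subshift b i_in.
split; first exact: is_Binf_subshift.
- by rewrite wtBB wtB_shift_vec // opprK.
- exact: eps_e.
by rewrite /f_star m_e subrK.
Qed.

End Operators.

Lemma Binf_is_crystal n :
  is_crystal (@pairA n) (@alphaA n) (@inBinf n) (@wtB n)
    (@eps_star n) (@phi_star n) (@e_star n) (@f_star n).
Proof.
move=> i b /inBinfP hb; split=> //.
- by split=> b' => [/(e_star_spec hb)|/(f_star_spec hb)] [/inBinfP].
- move=> b' /(e_star_spec hb) [_ wt_b' eps_b' _]; split=> //.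
  by rewrite /phi_star wt_b' eps_b' pairAD pairA_alphaA; lia.
- move=> b' /(f_star_spec hb) [_ wt_b' eps_b' _]; split=> //.
  by rewrite /phi_star wt_b' eps_b' pairAB pairA_alphaA; lia.
- by move=> b' /inBinfP hb'; split=> [/(f_star_spec hb)|/(e_star_spec hb')] [].
Qed.

Lemma iter_eS (I A : Type) (e : I -> A -> option A) i m b :
  iter_e e i m.+1 b = obind (e i) (iter_e e i m b).
Proof. by []. Qed.

Section HighestWeight.
Variable n : nat.
Implicit Types (i : 'I_n) (b : arr n).

Lemma Binf_neq0_e_star b : is_Binf b -> b != 0 ->
  exists i b', [/\ e_star i b = Some b', is_Binf b' & height (wtB b') = height (wtB b) + 1].
Proof.
move=> hb b_ne0.
have [/existsP[i eps_gt0] | /existsPn eps_le0] := boolP [exists i, 0 < eps_star i b].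
  have [b' e_b'] : exists b', e_star i b = Some b' by rewrite /e_star eps_gt0; eexists.
  have [hb' wt_b' _ _] := e_star_spec hb e_b'.
  by exists i, b'; rewrite wt_b' heightD height_alphaA.
by move: b_ne0; rewrite (Binf_eps_star_le0 hb) ?eqxx // => i; rewrite leNgt eps_le0.
Qed.

Lemma e_star_path_to0 b : is_Binf b ->
  exists s : seq 'I_n, foldl (fun ob i => obind (e_star i) ob) (Some b) s = Some 0.
Proof.
have [N] := ubnP `|height (wtB b)|; elim: N b => // N IH b hN hb.
case: (eqVneq b 0) => [->|b_ne0]; first by exists [::].
have [i [b' [e_b' hb' ht_b']]] := Binf_neq0_e_star hb b_ne0.
have [|s path_b'] := IH b' _ hb'; first by have := height_wtB_le0 hb'; lia.
by exists (i :: s); rewrite /= e_b'.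
Qed.

Lemma iter_e_star_Some i b m : is_Binf b -> m%:Z <= eps_star i b ->
  exists b', [/\ iter_e (@e_star n) i m b = Some b', is_Binf b'
              & eps_star i b' = eps_star i b - m%:Z].
Proof.
move=> hb; elim: m => [|m IH] m_le; first by exists b; rewrite subr0.
have [|b' [iter_b' hb' eps_b']] := IH; first by lia.
have [b'' e_b''] : exists b'', e_star i b' = Some b''.
  by rewrite /e_star eps_b' ifT; [eexists | lia].
have [hb'' _ eps_b'' _] := e_star_spec hb' e_b''.
by exists b''; rewrite iter_eS iter_b' /= e_b'' eps_b'' eps_b'; split=> //; lia.
Qed.

Lemma iter_e_star_None i b m : is_Binf b -> eps_star i b < m%:Z -> iter_e (@e_star n) i m b = None.
Proof.
move=> hb; elim: m => [|m IH] m_gt; first by have := eps_star_ge0 i hb; lia.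
rewrite iter_eS; case: (ltP (eps_star i b) m%:Z) => [/IH-> // | m_le].
have [b' [-> _ eps_b']] := iter_e_star_Some hb m_le.
by rewrite /= /e_star ifF //; apply/negbTE; rewrite -leNgt eps_b'; lia.
Qed.

End HighestWeight.

Theorem proposition6p1 (n : nat) (hn : (1 <= n)%N) :
  is_highest_weight_crystal (@pairA n) (@alphaA n) (@inBinf n) (@wtB n)
    (@eps_star n) (@phi_star n) (@e_star n) (@f_star n).
Proof.
split; first exact: Binf_is_crystal.
  by exists 0 => [|b /inBinfP /e_star_path_to0]; first exact/inBinfP/is_Binf0.
move=> i b /inBinfP hb; have eps_ge0 := eps_star_ge0 i hb; split=> // [|m].
  by have [|b' [-> _ _]] := @iter_e_star_Some n i b `|eps_star i b|%N hb; first lia.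
by apply: contra_notT; rewrite -ltNge => /(iter_e_star_None hb).
Qed.
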